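(* For every integer $n\geq 1$, the following equalities of combinatorial games hold: $$\uparrow^{[n]}*\ =\ \left\{0, \uparrow^{[n-1]}*\ \big|\ 0, \uparrow^{[n+1]}*\right\}\ =\ \left\{0, \uparrow^{[n-1]}*\ \big|\ 0\right\},$$ $$\downarrow_{[n]}*\ =\ \left\{0,\downarrow_{[n+1]}*\ \big|\ 0, \downarrow_{[n-1]}*\right\}\ =\ \left\{0\ \big|\ 0, \downarrow_{[n-1]}*\right\}.$$ Furthermore, $$\uparrow^{[n]}*\ =\ \left\{0,\{0,\uparrow^{[n]}*\ |\ 0,\uparrow^{[n]}*\}\ \Big|\ 0,\{0,\uparrow^{[n]}*\ |\ 0,\uparrow^{[n]}*\}\right\},$$ $$\downarrow_{[n]}*\ =\ \left\{0,\{0,\downarrow_{[n]}*\ |\ 0,\downarrow_{[n]}*\}\ \Big|\ 0,\{0,\downarrow_{[n]}*\ |\ 0,\downarrow_{[n]}*\}\right\}.$$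
   Context: Games are short partizan combinatorial games under normal play (the player unable to move loses), in Conway's theory: $\{X\mid Y\}$ denotes the game whose Left options are the games in $X$ and Right options the games in $Y$; $G+H$ is the disjunctive sum; $-G$ swaps the roles of Left and Right; $G=H$ means that $G+(-H)$ is a win for the second player. Notation: $0=\{\,\mid\,\}$, $*=\{0\mid 0\}$, $\uparrow=\{0\mid *\}$, $\downarrow=\{*\mid 0\}$; $\uparrow^{[1]}=\uparrow$ and $\uparrow^{[n]}=\{\uparrow^{[n-1]}\mid *\}$ for $n\geq 2$; $\downarrow_{[1]}=\downarrow$ and $\downarrow_{[n]}=\{*\mid \downarrow_{[n-1]}\}$ for $n\geq 2$; with the convention $\uparrow^{[0]}=\downarrow_{[0]}=0$. For a game $J$, $J*$ denotes $J+*$. *)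

(* short partizan games in Conway's theory, represented
   as finite trees whose nodes carry a finite list of Left options and a
   finite list of Right options. *)
From Stdlib Require Import List Bool Arith.
Import ListNotations.

Inductive game : Type :=
  | Game : list game -> list game -> game.

Notation "{{ X | Y }}" := (Game X Y) (at level 0).

Fixpoint gneg (g : game) : game :=
  match g with
  | Game l r => Game (map gneg r) (map gneg l)
  end.

Fixpoint gadd (g : game) : game -> game :=
  fix gadd_g (h : game) : game :=
    match g, h with
    | Game gl gr, Game hl hr =>
        Game (map (fun x => gadd x h) gl ++ map gadd_g hl)
             (map (fun x => gadd x h) gr ++ map gadd_g hr)
    end.

(* outcome under normal play: (Left wins moving first, Right wins moving first) *)
Fixpoint outcome (g : game) : bool * bool :=
  match g with
  | Game l r =>
      (existsb (fun x => negb (snd (outcome x))) l,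
       existsb (fun x => negb (fst (outcome x))) r)
  end.

Definition second_player_win (g : game) : Prop :=
  fst (outcome g) = false /\ snd (outcome g) = false.

Definition game_eq (g h : game) : Prop := second_player_win (gadd g (gneg h)).

Definition gzero : game := Game [] [].
Definition gstar : game := Game [gzero] [gzero].

Fixpoint upn (n : nat) : game :=
  match n with
  | 0 => gzero
  | S m => Game [upn m] [gstar]
  end.

Fixpoint downn (n : nat) : game :=
  match n with
  | 0 => gzero
  | S m => Game [gstar] [downn m]
  end.

Definition starred (g : game) : game := gadd g gstar.

From Stdlib Require Import List Lia Bool Setoid Morphisms.
Import ListNotations.

(* This relation is a congruence for sum and
   negation: sums are commutative and associative up to bisimilarity, bisimilar games have the
   same outcome, and adding a second-player win does not change an outcome.  Each equality is
   checked on G - H by naming a winning reply to every first move.  After a few such exchanges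
   one reaches a mirror position X - X, a small explicit game, or, once * + * = 0 is cancelled,
   a difference up^[a] - up^[b] with a <> b; for a > b the latter is won by Left whoever
   starts, since Left moves up^[a] to up^[a-1] and answers Right's move up^[a] -> * by reaching
   * + *.  The equalities for down_[n] = - up^[n] are the negatives of those for up^[n]. *)

Declare Scope game_scope.
Delimit Scope game_scope with game.
Bind Scope game_scope with game.
Infix "+" := gadd : game_scope.
Notation "- g" := (gneg g) : game_scope.
Notation "g - h" := (gadd g (gneg h)) : game_scope.
Open Scope game_scope.

(** * Options, outcomes and negation *)

Definition lefts (g : game) : list game := let '(Game l _) := g in l.
Definition rights (g : game) : list game := let '(Game _ r) := g in r.

Notation lwin g := (fst (outcome g)).
Notation rwin g := (snd (outcome g)).

Lemma game_ind_in (P : game -> Prop) :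
  (forall l r, (forall x, In x l -> P x) -> (forall x, In x r -> P x) -> P (Game l r)) ->
  forall g, P g.
Proof.
  intros step. fix IH 1. intros [l r]. apply step.
  - clear r. induction l as [|x l IHl]; [intros _ []|intros y [<-|Hy]; [apply IH|apply IHl, Hy]].
  - clear l. induction r as [|x r IHr]; [intros _ []|intros y [<-|Hy]; [apply IH|apply IHr, Hy]].
Qed.

Lemma lefts_gadd g h : lefts (g + h) = map (fun x => x + h) (lefts g) ++ map (gadd g) (lefts h).
Proof. now destruct g, h. Qed.

Lemma rights_gadd g h : rights (g + h) = map (fun x => x + h) (rights g) ++ map (gadd g) (rights h).
Proof. now destruct g, h. Qed.

Lemma lefts_gneg g : lefts (- g) = map gneg (rights g).
Proof. now destruct g. Qed.

Lemma rights_gneg g : rights (- g) = map gneg (lefts g).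
Proof. now destruct g. Qed.

Lemma in_lefts_gadd x g h :
  In x (lefts (g + h)) <->
  (exists y, y + h = x /\ In y (lefts g)) \/ (exists y, g + y = x /\ In y (lefts h)).
Proof. now rewrite lefts_gadd, in_app_iff, !in_map_iff. Qed.

Lemma in_rights_gadd x g h :
  In x (rights (g + h)) <->
  (exists y, y + h = x /\ In y (rights g)) \/ (exists y, g + y = x /\ In y (rights h)).
Proof. now rewrite rights_gadd, in_app_iff, !in_map_iff. Qed.

Lemma lwin_true g : lwin g = true <-> exists x, In x (lefts g) /\ rwin x = false.
Proof.
  destruct g as [l r]; cbn; rewrite existsb_exists.
  now setoid_rewrite negb_true_iff.
Qed.

Lemma rwin_true g : rwin g = true <-> exists x, In x (rights g) /\ lwin x = false.
Proof.
  destruct g as [l r]; cbn; rewrite existsb_exists.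
  now setoid_rewrite negb_true_iff.
Qed.

Lemma lwin_false g : lwin g = false <-> forall x, In x (lefts g) -> rwin x = true.
Proof.
  rewrite <- not_true_iff_false, lwin_true.
  setoid_rewrite <- not_false_iff_true. firstorder.
Qed.

Lemma rwin_false g : rwin g = false <-> forall x, In x (rights g) -> lwin x = true.
Proof.
  rewrite <- not_true_iff_false, rwin_true.
  setoid_rewrite <- not_false_iff_true. firstorder.
Qed.

Lemma gneg_involutive g : - - g = g.
Proof.
  induction g as [l r IHl IHr] using game_ind_in; cbn; rewrite !map_map.
  rewrite <- (map_id l) at 2; rewrite <- (map_id r) at 2.
  f_equal; apply map_ext_in; assumption.
Qed.

Lemma game_ext g h : lefts g = lefts h -> rights g = rights h -> g = h.
Proof. destruct g, h; cbn; congruence. Qed.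

Lemma gneg_gadd g h : - (g + h) = - g + - h.
Proof.
  revert h; induction g as [gl gr IHgl IHgr] using game_ind_in; intros h.
  induction h as [hl hr IHhl IHhr] using game_ind_in.
  apply game_ext; rewrite ?lefts_gneg, ?rights_gneg, ?lefts_gadd, ?rights_gadd, ?lefts_gneg, ?rights_gneg;
    cbn [lefts rights]; rewrite map_app, !map_map; f_equal; apply map_ext_in; auto.
Qed.

Lemma outcome_gneg g : outcome (- g) = (rwin g, lwin g).
Proof.
  induction g as [l r IHl IHr] using game_ind_in.
  apply injective_projections; apply eq_iff_eq_true; cbn [fst snd];
    rewrite ?lwin_true, ?rwin_true; cbn [lefts rights gneg]; setoid_rewrite in_map_iff; split.
  - intros (x & (y & <- & Hy) & Hx). rewrite (IHr y Hy) in Hx. eauto.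
  - intros (y & Hy & Hwin). exists (- y). rewrite (IHr y Hy). eauto.
  - intros (x & (y & <- & Hy) & Hx). rewrite (IHl y Hy) in Hx. eauto.
  - intros (y & Hy & Hwin). exists (- y). rewrite (IHl y Hy). eauto.
Qed.

Lemma lwin_gneg g : lwin (- g) = rwin g.
Proof. now rewrite outcome_gneg. Qed.

Lemma rwin_gneg g : rwin (- g) = lwin g.
Proof. now rewrite outcome_gneg. Qed.

(* Read [rwin g = false] as g >= 0 and [lwin g = true] as g |> 0. *)
Lemma gadd_ge0 g h :
  (rwin g = false -> rwin h = false -> rwin (g + h) = false) /\
  (lwin g = true -> rwin h = false -> lwin (g + h) = true) /\
  (rwin g = false -> lwin h = true -> lwin (g + h) = true).
Proof.
  revert h; induction g as [gl gr IHgl IHgr] using game_ind_in; intros h.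
  induction h as [hl hr IHhl IHhr] using game_ind_in.
  split; [|split].
  - intros Hg Hh. apply rwin_false. intros x [(y & <- & Hy)|(y & <- & Hy)]%in_rights_gadd.
    + destruct (IHgr y Hy (Game hl hr)) as (_ & IH & _).
      exact (IH (proj1 (rwin_false _) Hg y Hy) Hh).
    + destruct (IHhr y Hy) as (_ & _ & IH).
      exact (IH Hg (proj1 (rwin_false _) Hh y Hy)).
  - intros (y & Hy & Hwin)%lwin_true Hh. apply lwin_true. exists (y + Game hl hr).
    split; [apply in_lefts_gadd; eauto|]. now apply (IHgl y Hy).
  - intros Hg (y & Hy & Hwin)%lwin_true. apply lwin_true. exists (Game gl gr + y).
    split; [apply in_lefts_gadd; eauto|]. now apply (IHhl y Hy).
Qed.

Lemma gadd_le0 g h :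
  (lwin g = false -> lwin h = false -> lwin (g + h) = false) /\
  (rwin g = true -> lwin h = false -> rwin (g + h) = true) /\
  (lwin g = false -> rwin h = true -> rwin (g + h) = true).
Proof.
  destruct (gadd_ge0 (- g) (- h)) as (H1 & H2 & H3).
  rewrite <- gneg_gadd, !lwin_gneg, !rwin_gneg in *. auto.
Qed.

Lemma second_player_winE g : second_player_win g <-> lwin g = false /\ rwin g = false.
Proof. reflexivity. Qed.

Lemma outcome_ext g h : lwin g = lwin h -> rwin g = rwin h -> outcome g = outcome h.
Proof. apply injective_projections. Qed.

Lemma outcome_gadd_second_player_win x y : second_player_win y -> outcome (x + y) = outcome x.
Proof.
  intros [Hl Hr]. destruct (gadd_ge0 x y) as (G1 & G2 & _), (gadd_le0 x y) as (L1 & L2 & _).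
  apply outcome_ext.
  - destruct (lwin x) eqn:E; auto.
  - destruct (rwin x) eqn:E; auto.
Qed.

Lemma second_player_win_gadd x y :
  second_player_win y -> second_player_win (x + y) <-> second_player_win x.
Proof. intros Hy. unfold second_player_win. now rewrite (outcome_gadd_second_player_win x y Hy). Qed.

Lemma second_player_win_gneg g : second_player_win (- g) <-> second_player_win g.
Proof. rewrite !second_player_winE, lwin_gneg, rwin_gneg. tauto. Qed.

Lemma second_player_win_gsub_self g : second_player_win (g - g).
Proof.
  induction g as [l r IHl IHr] using game_ind_in. split.
  - apply lwin_false. intros x [(y & <- & Hy)|(y & <- & Hy)]%in_lefts_gadd; apply rwin_true.
    + exists (y - y). split; [|apply IHl, Hy].
      apply in_rights_gadd. right. exists (- y). split; [reflexivity|]. now apply in_map.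
    + rewrite lefts_gneg in Hy. apply in_map_iff in Hy as (z & <- & Hz).
      exists (z - z). split; [|apply IHr, Hz].
      apply in_rights_gadd. left. now exists z.
  - apply rwin_false. intros x [(y & <- & Hy)|(y & <- & Hy)]%in_rights_gadd; apply lwin_true.
    + exists (y - y). split; [|apply IHr, Hy].
      apply in_lefts_gadd. right. exists (- y). split; [reflexivity|]. now apply in_map.
    + rewrite rights_gneg in Hy. apply in_map_iff in Hy as (z & <- & Hz).
      exists (z - z). split; [|apply IHl, Hz].
      apply in_lefts_gadd. left. now exists z.
Qed.

(** * Bisimilar games *)

(* Sums are commutative and associative only up to the order and multiplicity of options,
   which [bisim] ignores. *)
Definition covers {A B} (R : A -> B -> Prop) (l : list A) (l' : list B) : Prop :=
  (forall x, In x l -> exists y, In y l' /\ R x y) /\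
  (forall y, In y l' -> exists x, In x l /\ R x y).

Lemma covers_diag {A} (R : A -> A -> Prop) l : (forall x, In x l -> R x x) -> covers R l l.
Proof. intros HR; split; intros x Hx; exists x; auto. Qed.

Lemma covers_flip {A B} (R : A -> B -> Prop) l l' : covers R l l' -> covers (fun y x => R x y) l' l.
Proof. intros [H1 H2]; split; assumption. Qed.

Lemma covers_impl {A B} (R R' : A -> B -> Prop) l l' :
  covers R l l' -> (forall x y, In x l -> In y l' -> R x y -> R' x y) -> covers R' l l'.
Proof.
  intros [H1 H2] HR; split.
  - intros x Hx. destruct (H1 x Hx) as (y & Hy & Hxy). eauto.
  - intros y Hy. destruct (H2 y Hy) as (x & Hx & Hxy). eauto.
Qed.

Lemma covers_compose {A B C} (R : A -> B -> Prop) (S : B -> C -> Prop) l l' l'' :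
  covers R l l' -> covers S l' l'' -> covers (fun x z => exists y, R x y /\ S y z) l l''.
Proof.
  intros [H1 H2] [K1 K2]; split.
  - intros x Hx. destruct (H1 x Hx) as (y & Hy & Hxy), (K1 y Hy) as (z & Hz & Hyz). eauto.
  - intros z Hz. destruct (K2 z Hz) as (y & Hy & Hyz), (H2 y Hy) as (x & Hx & Hxy). eauto.
Qed.

Lemma covers_map {A B C D} (S : A -> B -> Prop) (R : C -> D -> Prop) f f' l l' :
  covers S l l' -> (forall a a', In a l -> S a a' -> R (f a) (f' a')) ->
  covers R (map f l) (map f' l').
Proof.
  intros [H1 H2] Hf; split.
  - intros x (a & <- & Ha)%in_map_iff. destruct (H1 a Ha) as (a' & Ha' & Haa').
    exists (f' a'). split; [apply in_map|]; auto.
  - intros y (a' & <- & Ha')%in_map_iff. destruct (H2 a' Ha') as (a & Ha & Haa').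
    exists (f a). split; [apply in_map|]; auto.
Qed.

Lemma covers_map_diag {A C} (R : C -> C -> Prop) (f f' : A -> C) l :
  (forall a, In a l -> R (f a) (f' a)) -> covers R (map f l) (map f' l).
Proof.
  intros Hf. apply (covers_map eq); [now apply covers_diag|]. intros a ? Ha <-. auto.
Qed.

Lemma covers_app {A B} (R : A -> B -> Prop) l1 l2 l1' l2' :
  covers R l1 l1' -> covers R l2 l2' -> covers R (l1 ++ l2) (l1' ++ l2').
Proof.
  intros [H1 H2] [K1 K2]; split; intros x [Hx|Hx]%in_app_iff;
    [destruct (H1 x Hx) | destruct (K1 x Hx) | destruct (H2 x Hx) | destruct (K2 x Hx)];
    firstorder (eauto using in_or_app).
Qed.

Lemma covers_app_swap {A B} (R : A -> B -> Prop) l1 l2 l1' l2' :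
  covers R l1 l1' -> covers R l2 l2' -> covers R (l1 ++ l2) (l2' ++ l1').
Proof.
  intros H1 H2. destruct (covers_app R l1 l2 l1' l2' H1 H2) as [K1 K2]. split.
  - intros x Hx. destruct (K1 x Hx) as (y & Hy & Hxy).
    exists y. split; [|exact Hxy]. apply in_app_iff in Hy. apply in_app_iff. tauto.
  - intros y Hy. apply K2. apply in_app_iff in Hy. apply in_app_iff. tauto.
Qed.

Inductive bisim : game -> game -> Prop :=
  | bisim_Game l r l' r' : covers bisim l l' -> covers bisim r r' -> bisim (Game l r) (Game l' r').

Lemma bisim_intro g h :
  covers bisim (lefts g) (lefts h) -> covers bisim (rights g) (rights h) -> bisim g h.
Proof. destruct g, h; constructor; assumption. Qed.

Lemma bisim_options g h :
  bisim g h -> covers bisim (lefts g) (lefts h) /\ covers bisim (rights g) (rights h).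
Proof. now intros []. Qed.

Lemma bisim_refl g : bisim g g.
Proof.
  induction g as [l r IHl IHr] using game_ind_in.
  constructor; now apply covers_diag.
Qed.

Lemma bisim_sym g h : bisim g h -> bisim h g.
Proof.
  revert h; induction g as [l r IHl IHr] using game_ind_in; intros h [Hl Hr]%bisim_options.
  apply bisim_intro; eapply covers_impl; try apply covers_flip; eauto.
Qed.

Lemma bisim_trans g h k : bisim g h -> bisim h k -> bisim g k.
Proof.
  revert h k; induction g as [l r IHl IHr] using game_ind_in.
  intros h k [Hl Hr]%bisim_options [Kl Kr]%bisim_options.
  apply bisim_intro; eapply covers_impl; try eapply covers_compose; eauto;
    cbn; intros x z Hx _ (y & Hxy & Hyz); eauto.
Qed.

Lemma bisim_gadd g g' h h' : bisim g g' -> bisim h h' -> bisim (g + h) (g' + h').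
Proof.
  revert g' h h'; induction g as [gl gr IHgl IHgr] using game_ind_in; intros g' h.
  induction h as [hl hr IHhl IHhr] using game_ind_in; intros h' Hg Hh.
  destruct (bisim_options _ _ Hg) as [Gl Gr], (bisim_options _ _ Hh) as [Hl Hr].
  apply bisim_intro; rewrite ?lefts_gadd, ?rights_gadd;
    apply covers_app; eapply covers_map; eauto.
Qed.

Lemma bisim_gneg g h : bisim g h -> bisim (- g) (- h).
Proof.
  revert h; induction g as [l r IHl IHr] using game_ind_in; intros h [Hl Hr]%bisim_options.
  apply bisim_intro; rewrite ?lefts_gneg, ?rights_gneg; eapply covers_map; eauto.
Qed.

Lemma bisim_gadd_comm g h : bisim (g + h) (h + g).
Proof.
  revert h; induction g as [gl gr IHgl IHgr] using game_ind_in; intros h.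
  induction h as [hl hr IHhl IHhr] using game_ind_in.
  apply bisim_intro; rewrite ?lefts_gadd, ?rights_gadd;
    apply covers_app_swap; apply covers_map_diag; auto.
Qed.

Lemma bisim_gadd_assoc g h k : bisim (g + h + k) (g + (h + k)).
Proof.
  revert h k; induction g as [gl gr IHgl IHgr] using game_ind_in; intros h.
  induction h as [hl hr IHhl IHhr] using game_ind_in; intros k.
  induction k as [kl kr IHkl IHkr] using game_ind_in.
  apply bisim_intro; rewrite ?lefts_gadd, ?rights_gadd, !map_app, !map_map, app_assoc;
    repeat apply covers_app; apply covers_map_diag; auto.
Qed.

Lemma bisim_gadd_0_r g : bisim (g + gzero) g.
Proof.
  induction g as [l r IHl IHr] using game_ind_in.
  apply bisim_intro; rewrite ?lefts_gadd, ?rights_gadd; cbn [lefts rights gzero map];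
    rewrite app_nil_r; [rewrite <- (map_id l) at 2 | rewrite <- (map_id r) at 2];
    apply covers_map_diag; auto.
Qed.

Lemma outcome_bisim g h : bisim g h -> outcome g = outcome h.
Proof.
  revert h; induction g as [l r IHl IHr] using game_ind_in; intros h [[Hl1 Hl2] [Hr1 Hr2]]%bisim_options.
  apply outcome_ext; apply eq_iff_eq_true; rewrite ?lwin_true, ?rwin_true; split.
  - intros (x & Hx & Hwin). destruct (Hl1 x Hx) as (y & Hy & Hxy).
    exists y. split; [exact Hy|]. specialize (IHl x Hx y Hxy). congruence.
  - intros (y & Hy & Hwin). destruct (Hl2 y Hy) as (x & Hx & Hxy).
    exists x. split; [exact Hx|]. specialize (IHl x Hx y Hxy). congruence.
  - intros (x & Hx & Hwin). destruct (Hr1 x Hx) as (y & Hy & Hxy).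
    exists y. split; [exact Hy|]. specialize (IHr x Hx y Hxy). congruence.
  - intros (y & Hy & Hwin). destruct (Hr2 y Hy) as (x & Hx & Hxy).
    exists x. split; [exact Hx|]. specialize (IHr x Hx y Hxy). congruence.
Qed.

#[local] Instance bisim_Equivalence : Equivalence bisim.
Proof. split; [exact bisim_refl | exact bisim_sym | exact bisim_trans]. Qed.

#[local] Instance gadd_bisim_Proper : Proper (bisim ==> bisim ==> bisim) gadd.
Proof. intros g g' Hg h h' Hh. now apply bisim_gadd. Qed.

#[local] Instance gneg_bisim_Proper : Proper (bisim ==> bisim) gneg.
Proof. exact bisim_gneg. Qed.

#[local] Instance second_player_win_bisim_Proper : Proper (bisim ==> iff) second_player_win.
Proof. intros g h Hgh. unfold second_player_win. now rewrite (outcome_bisim g h Hgh). Qed.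

Lemma bisim_gadd_interchange a b c d : bisim ((a + b) + (c + d)) ((a + c) + (b + d)).
Proof.
  rewrite !bisim_gadd_assoc, <- (bisim_gadd_assoc b c d), (bisim_gadd_comm b c).
  now rewrite bisim_gadd_assoc.
Qed.

(** * Equality of games *)

Lemma bisim_game_eq g h : bisim g h -> game_eq g h.
Proof. intros Hgh. unfold game_eq. rewrite <- Hgh. apply second_player_win_gsub_self. Qed.

Lemma game_eq_sym g h : game_eq g h -> game_eq h g.
Proof.
  unfold game_eq. intros Hgh. apply second_player_win_gneg in Hgh.
  now rewrite gneg_gadd, gneg_involutive, bisim_gadd_comm in Hgh.
Qed.

Lemma game_eq_trans g h k : game_eq g h -> game_eq h k -> game_eq g k.
Proof.
  unfold game_eq. intros Hgh Hhk.
  rewrite <- (second_player_win_gadd (g - k) (h - h) (second_player_win_gsub_self h)).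
  rewrite bisim_gadd_interchange, (bisim_gadd_comm (- k) (- h)), <- bisim_gadd_interchange.
  now apply second_player_win_gadd.
Qed.

Lemma game_eq_gadd g g' h h' : game_eq g g' -> game_eq h h' -> game_eq (g + h) (g' + h').
Proof.
  unfold game_eq. intros Hg Hh.
  rewrite gneg_gadd, bisim_gadd_interchange. now apply second_player_win_gadd.
Qed.

Lemma game_eq_gneg g h : game_eq g h -> game_eq (- g) (- h).
Proof. unfold game_eq. now rewrite <- gneg_gadd, second_player_win_gneg. Qed.

Lemma outcome_game_eq g h : game_eq g h -> outcome g = outcome h.
Proof.
  intros Hgh. rewrite <- (outcome_gadd_second_player_win h (g - h) Hgh), <- (outcome_gadd_second_player_win g (h - h) (second_player_win_gsub_self h)).
  apply outcome_bisim. now rewrite <- !bisim_gadd_assoc, (bisim_gadd_comm h g).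
Qed.

#[local] Instance game_eq_Equivalence : Equivalence game_eq.
Proof. split; [exact second_player_win_gsub_self | exact game_eq_sym | exact game_eq_trans]. Qed.

#[local] Instance gadd_Proper : Proper (game_eq ==> game_eq ==> game_eq) gadd.
Proof. intros g g' Hg h h' Hh. now apply game_eq_gadd. Qed.

#[local] Instance outcome_Proper : Proper (game_eq ==> eq) outcome.
Proof. exact outcome_game_eq. Qed.

Lemma gadd_comm g h : game_eq (g + h) (h + g).
Proof. apply bisim_game_eq, bisim_gadd_comm. Qed.

Lemma gadd_0_r g : game_eq (g + gzero) g.
Proof. apply bisim_game_eq, bisim_gadd_0_r. Qed.

Lemma gadd_interchange a b c d : game_eq ((a + b) + (c + d)) ((a + c) + (b + d)).
Proof. apply bisim_game_eq, bisim_gadd_interchange. Qed.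

Lemma game_eq_intro g h : lwin (g - h) = false -> rwin (g - h) = false -> game_eq g h.
Proof. now split. Qed.

(* Reading [lwin (g - h) = false] as g <= h and [rwin (g - h) = false] as g >= h, these are
   Conway's recursive characterizations of the order. *)
Lemma lwin_gsub_true g h :
  lwin (g - h) = true <->
  (exists x, In x (lefts g) /\ rwin (x - h) = false) \/
  (exists y, In y (rights h) /\ rwin (g - y) = false).
Proof.
  rewrite lwin_true. setoid_rewrite in_lefts_gadd. rewrite lefts_gneg. setoid_rewrite in_map_iff.
  firstorder (subst; eauto).
Qed.

Lemma rwin_gsub_true g h :
  rwin (g - h) = true <->
  (exists x, In x (rights g) /\ lwin (x - h) = false) \/
  (exists y, In y (lefts h) /\ lwin (g - y) = false).
Proof.
  rewrite rwin_true. setoid_rewrite in_rights_gadd. rewrite rights_gneg. setoid_rewrite in_map_iff.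
  firstorder (subst; eauto).
Qed.

Lemma lwin_gsub_false g h :
  lwin (g - h) = false <->
  (forall x, In x (lefts g) -> rwin (x - h) = true) /\
  (forall y, In y (rights h) -> rwin (g - y) = true).
Proof.
  rewrite lwin_false. setoid_rewrite in_lefts_gadd. rewrite lefts_gneg. setoid_rewrite in_map_iff.
  firstorder (subst; eauto).
Qed.

Lemma rwin_gsub_false g h :
  rwin (g - h) = false <->
  (forall x, In x (rights g) -> lwin (x - h) = true) /\
  (forall y, In y (lefts h) -> lwin (g - y) = true).
Proof.
  rewrite rwin_false. setoid_rewrite in_rights_gadd. rewrite rights_gneg. setoid_rewrite in_map_iff.
  firstorder (subst; eauto).
Qed.

(** * The games up^[n]* *)

Definition twin (g : game) : game := Game [gzero; g] [gzero; g].

Lemma lefts_starred g : lefts (starred g) = map starred (lefts g) ++ [g + gzero].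
Proof. unfold starred. now rewrite lefts_gadd. Qed.

Lemma rights_starred g : rights (starred g) = map starred (rights g) ++ [g + gzero].
Proof. unfold starred. now rewrite rights_gadd. Qed.

Lemma lefts_gzero : lefts gzero = [].
Proof. reflexivity. Qed.

Lemma rights_gzero : rights gzero = [].
Proof. reflexivity. Qed.

Lemma gneg_gzero : - gzero = gzero.
Proof. reflexivity. Qed.

Lemma gneg_gstar : - gstar = gstar.
Proof. reflexivity. Qed.

Lemma lefts_gstar : lefts gstar = [gzero].
Proof. reflexivity. Qed.

Lemma rights_gstar : rights gstar = [gzero].
Proof. reflexivity. Qed.

Lemma lefts_upn_S m : lefts (upn (S m)) = [upn m].
Proof. reflexivity. Qed.

Lemma rights_upn_S m : rights (upn (S m)) = [gstar].
Proof. reflexivity. Qed.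

Lemma lefts_twin g : lefts (twin g) = [gzero; g].
Proof. reflexivity. Qed.

Lemma rights_twin g : rights (twin g) = [gzero; g].
Proof. reflexivity. Qed.

#[local] Hint Rewrite lefts_gadd rights_gadd lefts_starred rights_starred lefts_gzero rights_gzero
  lefts_gstar rights_gstar lefts_upn_S rights_upn_S lefts_twin rights_twin : options.

Ltac case_option H :=
  repeat progress (autorewrite with options in H; cbn [lefts rights map app In] in H);
  repeat destruct H as [<- | H]; try contradiction.

Ltac pick_disjunct := first [reflexivity | left; pick_disjunct | right; pick_disjunct].

Ltac is_option :=
  repeat progress (autorewrite with options; cbn [lefts rights map app In]);
  rewrite ?in_app_iff; pick_disjunct.

Lemma gsub_gzero g : game_eq (g - gzero) g.
Proof. rewrite gneg_gzero. apply gadd_0_r. Qed.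

Lemma gstar_gstar : game_eq (gstar + gstar) gzero.
Proof. now split. Qed.

Lemma gsub_starred a b : game_eq (starred a - starred b) (a - b).
Proof.
  unfold starred. rewrite gneg_gadd, gneg_gstar, gadd_interchange, gstar_gstar.
  apply gadd_0_r.
Qed.

Lemma starred_upn_0 : game_eq gstar (starred (upn 0)).
Proof. now split. Qed.

Lemma outcome_gsub_swap g h : outcome (h - g) = (rwin (g - h), lwin (g - h)).
Proof.
  rewrite <- outcome_gneg, gneg_gadd, gneg_involutive.
  apply outcome_game_eq, gadd_comm.
Qed.

Lemma rwin_upn m : rwin (upn m) = false.
Proof. destruct m as [|m]; [reflexivity|]. apply rwin_false. intros x Hx. now case_option Hx. Qed.

Lemma outcome_starred_upn m : outcome (starred (upn m)) = (true, true).
Proof.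
  apply injective_projections; cbn [fst snd].
  - apply lwin_true. exists (upn m + gzero). split; [is_option|].
    rewrite gadd_0_r. apply rwin_upn.
  - destruct m as [|m]; [reflexivity|].
    apply rwin_true. exists (starred gstar). split; [is_option|reflexivity].
Qed.

Lemma lwin_gstar_gsub_upn b : lwin (gstar - upn b) = true.
Proof.
  apply lwin_gsub_true. destruct b as [|b].
  - left. exists gzero. split; [is_option|reflexivity].
  - right. exists gstar. split; [is_option|reflexivity].
Qed.

Lemma outcome_upn_gsub a b : b < a -> outcome (upn a - upn b) = (true, false).
Proof.
  revert b; induction a as [|a IHa]; intros b Hb; [lia|].
  assert (Hl : forall c, c <= a -> lwin (upn (S a) - upn c) = true).
  { intros c Hc. apply lwin_gsub_true. left. exists (upn a). split; [is_option|].
    assert (Hca : c < a \/ c = a) by lia.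
    destruct Hca as [Hca | ->]; [|apply second_player_win_gsub_self].
    now rewrite IHa by lia. }
  apply injective_projections; cbn [fst snd]; [apply Hl; lia|].
  apply rwin_gsub_false. split; intros x Hx.
  - case_option Hx. apply lwin_gstar_gsub_upn.
  - destruct b as [|b]; [destruct Hx|]. case_option Hx. apply Hl. lia.
Qed.

Lemma outcome_starred_upn_gsub a b : b < a -> outcome (starred (upn a) - starred (upn b)) = (true, false).
Proof. intros Hb. rewrite gsub_starred. now apply outcome_upn_gsub. Qed.

Lemma outcome_starred_upn_gsub_rev a b :
  b < a -> outcome (starred (upn b) - starred (upn a)) = (false, true).
Proof. intros Hb. now rewrite outcome_gsub_swap, outcome_starred_upn_gsub. Qed.

Lemma outcome_gstar_gsub_starred_upn k : 0 < k -> outcome (gstar - starred (upn k)) = (false, true).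
Proof. intros Hk. rewrite starred_upn_0. now apply outcome_starred_upn_gsub_rev. Qed.

Lemma gstar_le g :
  In gzero (lefts g) -> (forall y, In y (rights g) -> rwin (gstar - y) = true) ->
  lwin (gstar - g) = false.
Proof.
  intros H0 HR. apply lwin_gsub_false. split; [|exact HR].
  intros x Hx. case_option Hx. apply rwin_gsub_true. right. now exists gzero.
Qed.

Lemma starred_upn_le m g :
  In gzero (lefts g) ->
  (exists y, In y (lefts g) /\ lwin (starred (upn m) - y) = false) ->
  (forall y, In y (rights g) -> rwin (starred (upn (S m)) - y) = true /\ rwin (gstar - y) = true) ->
  lwin (starred (upn (S m)) - g) = false.
Proof.
  intros H0 HL HR. apply lwin_gsub_false. split; [|apply HR].
  intros x Hx. case_option Hx; apply rwin_gsub_true.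
  - right. exact HL.
  - left. exists (gstar + gzero). split; [is_option|].
    rewrite gadd_0_r. apply gstar_le; [exact H0|apply HR].
Qed.

Lemma starred_upn_ge m g :
  In gzero (rights g) -> (forall y, In y (lefts g) -> lwin (starred (upn (S m)) - y) = true) ->
  rwin (starred (upn (S m)) - g) = false.
Proof.
  intros H0 HL. apply rwin_gsub_false. split; [|exact HL].
  intros x Hx. case_option Hx; apply lwin_gsub_true; right; now exists gzero.
Qed.

Lemma lwin_gsub_twin g : lwin (g - twin g) = true.
Proof. apply lwin_gsub_true. right. exists g. split; [is_option|apply second_player_win_gsub_self]. Qed.

Lemma rwin_gsub_twin g : rwin (g - twin g) = true.
Proof. apply rwin_gsub_true. right. exists g. split; [is_option|apply second_player_win_gsub_self]. Qed.

Lemma starred_upn_eq_Game m r :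
  In gzero r -> (forall y, In y r -> y = gzero \/ exists k, S m < k /\ y = starred (upn k)) ->
  game_eq (starred (upn (S m))) (Game [gzero; starred (upn m)] r).
Proof.
  intros H0 Hr. apply game_eq_intro.
  - apply starred_upn_le.
    + is_option.
    + exists (starred (upn m)). split; [is_option|apply second_player_win_gsub_self].
    + intros y Hy. destruct (Hr y Hy) as [->|(k & Hk & ->)].
      * rewrite gsub_gzero, outcome_starred_upn. now split.
      * rewrite outcome_starred_upn_gsub_rev, outcome_gstar_gsub_starred_upn by lia. now split.
  - apply starred_upn_ge; [exact H0|]. intros y Hy. case_option Hy.
    + now rewrite gsub_gzero, outcome_starred_upn.
    + now rewrite outcome_starred_upn_gsub by lia.
Qed.

Lemma starred_upn_le_twin m : lwin (starred (upn m) - twin (starred (upn (S m)))) = false.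
Proof.
  destruct m as [|m].
  - rewrite <- starred_upn_0. apply gstar_le; [is_option|].
    intros y Hy. case_option Hy; [reflexivity|].
    now rewrite outcome_gstar_gsub_starred_upn by lia.
  - apply starred_upn_le; [is_option| |].
    + exists (starred (upn (S (S m)))). split; [is_option|].
      now rewrite outcome_starred_upn_gsub_rev by lia.
    + intros y Hy. case_option Hy.
      * rewrite gsub_gzero, outcome_starred_upn. now split.
      * rewrite outcome_starred_upn_gsub_rev, outcome_gstar_gsub_starred_upn by lia. now split.
Qed.

Lemma starred_upn_eq_twin_twin m :
  game_eq (starred (upn (S m))) (twin (twin (starred (upn (S m))))).
Proof.
  apply game_eq_intro.
  - apply starred_upn_le.
    + is_option.
    + exists (twin (starred (upn (S m)))). split; [is_option|apply starred_upn_le_twin].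
    + intros y Hy. case_option Hy.
      * rewrite gsub_gzero, outcome_starred_upn. now split.
      * split; [apply rwin_gsub_twin|].
        apply rwin_gsub_true. right. exists (starred (upn (S m))). split; [is_option|].
        now rewrite outcome_gstar_gsub_starred_upn by lia.
  - apply starred_upn_ge; [is_option|]. intros y Hy. case_option Hy.
    + now rewrite gsub_gzero, outcome_starred_upn.
    + apply lwin_gsub_twin.
Qed.

Lemma downn_gneg n : downn n = - upn n.
Proof. induction n as [|n IHn]; [reflexivity|]. cbn [downn upn gneg map]. now rewrite IHn. Qed.

Lemma starred_gneg g : starred (- g) = - starred g.
Proof. unfold starred. now rewrite gneg_gadd. Qed.

Theorem theorem2 : forall n : nat, 1 <= n ->
  (* up^[n]* = {0, up^[n-1]* | 0, up^[n+1]*} = {0, up^[n-1]* | 0} *)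
  (game_eq (starred (upn n))
       (Game [gzero; starred (upn (n - 1))] [gzero; starred (upn (n + 1))]) /\
   game_eq (Game [gzero; starred (upn (n - 1))] [gzero; starred (upn (n + 1))])
       (Game [gzero; starred (upn (n - 1))] [gzero])) /\
  (* down_[n]* = {0, down_[n+1]* | 0, down_[n-1]*} = {0 | 0, down_[n-1]*} *)
  (game_eq (starred (downn n))
       (Game [gzero; starred (downn (n + 1))] [gzero; starred (downn (n - 1))]) /\
   game_eq (Game [gzero; starred (downn (n + 1))] [gzero; starred (downn (n - 1))])
       (Game [gzero] [gzero; starred (downn (n - 1))])) /\
  (* up^[n]* = {0, {0, up^[n]* | 0, up^[n]*} | 0, {0, up^[n]* | 0, up^[n]*}} *)
  game_eq (starred (upn n))
      (Game [gzero; Game [gzero; starred (upn n)] [gzero; starred (upn n)]]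
            [gzero; Game [gzero; starred (upn n)] [gzero; starred (upn n)]]) /\
  (* down_[n]* = {0, {0, down_[n]* | 0, down_[n]*} | 0, {0, down_[n]* | 0, down_[n]*}} *)
  game_eq (starred (downn n))
      (Game [gzero; Game [gzero; starred (downn n)] [gzero; starred (downn n)]]
            [gzero; Game [gzero; starred (downn n)] [gzero; starred (downn n)]]).
Proof.
  intros n Hn. destruct n as [|m]; [lia|].
  replace (S m - 1)%nat with m by lia. replace (S m + 1)%nat with (S (S m)) by lia.
  assert (A : game_eq (starred (upn (S m)))
                (Game [gzero; starred (upn m)] [gzero; starred (upn (S (S m)))])).
  { apply starred_upn_eq_Game; [now left|]. intros y [<-|[<-|[]]]; [now left|right; eauto]. }
  assert (B : game_eq (starred (upn (S m))) (Game [gzero; starred (upn m)] [gzero])).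
  { apply starred_upn_eq_Game; [now left|]. intros y [<-|[]]. now left. }
  assert (AB : game_eq (Game [gzero; starred (upn m)] [gzero; starred (upn (S (S m)))])
                 (Game [gzero; starred (upn m)] [gzero])) by now rewrite <- A.
  pose proof (starred_upn_eq_twin_twin m) as E.
  rewrite !downn_gneg, !starred_gneg.
  split; [split|split; [split|split]].
  - exact A.
  - exact AB.
  - exact (game_eq_gneg _ _ A).
  - exact (game_eq_gneg _ _ AB).
  - exact E.
  - exact (game_eq_gneg _ _ E).
Qed.
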